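(* Let $n\ge 1$ and let $Q=Q_1\otimes\cdots\otimes Q_n\in\mathcal{P}_n$ satisfy $Q^2=I$, $Q\neq\pm I$, and $Q$ anticommutes with $Z\otimes I\otimes\cdots\otimes I$. Then there exists a unique $X$-circuit $M$ on $n$ qubits such that $M\bullet Q=I\otimes\cdots\otimes I\otimes X$.
   Context: Matrices: $X=\begin{bmatrix}0&1\\1&0\end{bmatrix}$, $Z=\begin{bmatrix}1&0\\0&-1\end{bmatrix}$, $H=\frac{1}{\sqrt2}\begin{bmatrix}1&1\\1&-1\end{bmatrix}$, $CZ=\mathrm{diag}(1,1,1,-1)$. Operators on $n$ qubits act on $(\mathbb{R}^2)^{\otimes n}$, qubit $1$ being the first tensor factor; a one-qubit gate on qubit $i$, or a two-qubit gate on qubits $i,i+1$ (with qubit $i$ the first tensor factor of the gate, called its upper qubit), denotes that matrix tensored with identities on the other qubits. For matrices $C,P$, $C\bullet P=CPC^{-1}$. Real Pauli group: $\mathcal{P}_n=\{\pm(P_1\otimes\cdots\otimes P_n)\mid P_i\in\{I,X,Z,XZ\}\}$. A circuit is a finite sequence of gates $g_1,\dots,g_k$ ($g_1$ applied first); its operator is $g_k\cdots g_1$, and $M\bullet Q$ means (operator of $M$)$\bullet Q$. Derived generators (formal symbols with defining gate sequences; in a two-qubit symbol subscript $1$ is the upper, $2$ the lower qubit; '';'' separates steps): $E_1$ = empty, $E_2$ = $Z$; $D_1$ = $CZ;\,H_1,H_2;\,CZ;\,H_1,H_2;\,CZ;\,H_2$; $D_2$ = $H_1;\,CZ;\,H_1,H_2;\,CZ;\,H_2$;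 $D_3$ = $H_1,H_2;\,CZ;\,H_1,H_2;\,CZ;\,H_2$; $D_4$ = $H_1;\,CZ;\,H_1,H_2;\,CZ;\,H_2;\,CZ$. An $X$-circuit on $n$ qubits is a sequence of symbols of the form $D_{d_1}$ on qubits $1,2$, then $D_{d_2}$ on qubits $2,3$, ..., then $D_{d_{n-1}}$ on qubits $n-1,n$, then $E_e$ on qubit $n$ (for $n=1$ it is just $E_e$ on qubit 1), with $d_i\in\{1,2,3,4\}$, $e\in\{1,2\}$; two $X$-circuits are equal when their symbol sequences coincide. *)

From HB Require Import structures.
From mathcomp Require Import all_boot all_order all_algebra.
From mathcomp Require Import reals.
From mathcomp Require Export mxtens.

Set Implicit Arguments.
Unset Strict Implicit.
Unset Printing Implicit Defensive.

Import Order.TTheory GRing.Theory Num.Theory.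
Local Open Scope ring_scope.

Section Qubits.
Variable R : realType.

Definition Xm : 'M[R]_2 := \matrix_(i < 2, j < 2) (if i != j then 1 else 0).
Definition Zm : 'M[R]_2 :=
  \matrix_(i < 2, j < 2) (if i == j then (if i == 0 :> nat then 1 else -1) else 0).
Definition Hm : 'M[R]_2 :=
  \matrix_(i < 2, j < 2)
    ((Num.sqrt 2)^-1 * (if (i == 1 :> nat) && (j == 1 :> nat) then -1 else 1)).
Definition CZm : 'M[R]_4 :=
  \matrix_(i < 4, j < 4)
    (if i == j then (if i == 3 :> nat then -1 else 1) else 0).

(* Dimension 2^n of the n-qubit space (defined so that qdim n.+1 = 2 * qdim n
   holds by computation). *)
Fixpoint qdim (n : nat) : nat := if n is n'.+1 then (2 * qdim n')%N else 1%N.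

Lemma qdimE (n : nat) : qdim n = (2 ^ n)%N.
Proof. by elim: n => //= n ->; rewrite expnS. Qed.

Lemma dim4 (k : nat) : (4 * qdim k = qdim k.+2)%N.
Proof. by rewrite /= mulnA. Qed.

(* Operator on n qubits ((R^2)^{\otimes n}, qubit 1 = first tensor factor)
   of a one-qubit gate G on qubit i (1-based): I ⊗ .. ⊗ G ⊗ .. ⊗ I.
   (Out-of-range positions give the identity; they are never used.) *)
Fixpoint op1 (n : nat) : nat -> 'M[R]_2 -> 'M[R]_(qdim n) :=
  match n with
  | 0 => fun _ _ => 1%:M
  | n'.+1 => fun i G =>
      match i with
      | 0 => 1%:M
      | 1 => (G *t (1%:M : 'M[R]_(qdim n')) : 'M[R]_(qdim n'.+1))
      | i'.+1 => ((1%:M : 'M[R]_2) *t op1 n' i' G : 'M[R]_(qdim n'.+1))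
      end
  end.

(* Two-qubit gate G on qubits i, i+1 (qubit i = upper = first factor of G). *)
Definition top2 (n' : nat) (G : 'M[R]_4) : 'M[R]_(qdim n'.+1) :=
  match n' with
  | 0 => 1%:M
  | k.+1 => castmx (dim4 k, dim4 k) (G *t (1%:M : 'M[R]_(qdim k)))
  end.

Fixpoint op2 (n : nat) : nat -> 'M[R]_4 -> 'M[R]_(qdim n) :=
  match n with
  | 0 => fun _ _ => 1%:M
  | n'.+1 => fun i G =>
      match i with
      | 0 => 1%:M
      | 1 => top2 n' G
      | i'.+1 => ((1%:M : 'M[R]_2) *t op2 n' i' G : 'M[R]_(qdim n'.+1))
      end
  end.

Inductive gate :=
  | Gate1 of 'M[R]_2 & nat
  | Gate2 of 'M[R]_4 & nat.  (* two-qubit gate on qubits i, i+1 *)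

Definition gate_op (n : nat) (g : gate) : 'M[R]_(qdim n) :=
  match g with
  | Gate1 G i => op1 n i G
  | Gate2 G i => op2 n i G
  end.

(* Operator of the circuit g_1, ..., g_k (g_1 applied first): g_k ... g_1. *)
Definition circuit_op (n : nat) (c : seq gate) : 'M[R]_(qdim n) :=
  foldl (fun acc g => gate_op n g *m acc) 1%:M c.

Definition conjb (m : nat) (C P : 'M[R]_m) : 'M[R]_m := C *m P *m invmx C.

(* n-fold tensor product f 0 ⊗ f 1 ⊗ ... ⊗ f (n-1) (f i acts on qubit i+1). *)
Fixpoint tensn (n : nat) : (nat -> 'M[R]_2) -> 'M[R]_(qdim n) :=
  match n with
  | 0 => fun _ => 1%:M
  | n'.+1 => fun f => (f 0%N *t tensn n' (fun i => f i.+1) : 'M[R]_(qdim n'.+1))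
  end.

End Qubits.

Inductive pauli := PI | PX | PZ | PXZ.

Definition pauli_mx (R : realType) (p : pauli) : 'M[R]_2 :=
  match p with
  | PI => 1%:M
  | PX => Xm R
  | PZ => Zm R
  | PXZ => Xm R *m Zm R
  end.

Definition pauli_op (R : realType) (n : nat) (s : bool) (P : n.-tuple pauli)
  : 'M[R]_(qdim n) :=
  (-1) ^+ s *: tensn n (fun i => pauli_mx R (nth PI P i)).

(* Derived generators; in a two-qubit symbol, 1 = upper qubit i, 2 = lower i+1. *)
Inductive Dsym := D1 | D2 | D3 | D4.
Inductive Esym := E1 | E2.

Definition D_gates (R : realType) (d : Dsym) (i : nat) : seq (gate R) :=
  let CZ := Gate2 (CZm R) i in
  let H1 := Gate1 (Hm R) i in
  let H2 := Gate1 (Hm R) i.+1 in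
  match d with
  | D1 => [:: CZ; H1; H2; CZ; H1; H2; CZ; H2]
  | D2 => [:: H1; CZ; H1; H2; CZ; H2]
  | D3 => [:: H1; H2; CZ; H1; H2; CZ; H2]
  | D4 => [:: H1; CZ; H1; H2; CZ; H2; CZ]
  end.

Definition E_gates (R : realType) (e : Esym) (i : nat) : seq (gate R) :=
  match e with
  | E1 => [::]
  | E2 => [:: Gate1 (Zm R) i]
  end.

(* An X-circuit on n qubits: symbols D_{d_1} (qubits 1,2), ...,
   D_{d_{n-1}} (qubits n-1,n), then E_e (qubit n). Equality of X-circuits is
   equality of the symbol data (d, e). *)
Definition xcircuit (n : nat) : Type := ((n.-1).-tuple Dsym * Esym)%type.

Definition xcircuit_gates (R : realType) (n : nat) (M : xcircuit n) : seq (gate R) :=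
  flatten [seq D_gates R p.1 p.2 | p <- zip (tval M.1) (iota 1 n.-1)]
  ++ E_gates R M.2 n.

Definition xcircuit_op (R : realType) (n : nat) (M : xcircuit n) : 'M[R]_(qdim n) :=
  circuit_op n (xcircuit_gates R M).

From mathcomp Require Import all_boot all_algebra.
From mathcomp Require Import reals ring lra.

(** As Q anticommutes with Z on qubit 1,
    its first factor has an X-part.  Conjugation by D_1, ..., D_4 on qubits 1, 2
    permutes signed Pauli pairs; a finite computation shows that exactly one of
    them, determined by Q_2, turns (Q_1, Q_2) into (±I, P) with P again having an
    X-part, so that the rest of the circuit faces the same problem on qubits
    2, ..., n.  The other three leave a traceless factor on qubit 1, which no
    circuit acting on qubits 2, ..., n can match with the identity factor of the
    target.  On the last qubit Q^2 = I rules out XZ, so the remaining factor is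
    ±X, and the sign decides between E_1 and E_2 (Z X Z = -X). *)

Set Implicit Arguments.
Unset Strict Implicit.
Unset Printing Implicit Defensive.

Import GRing.Theory Num.Theory.
Local Open Scope ring_scope.

Section KroneckerProduct.
Variable R : comPzRingType.

Lemma tensmxZl m n p q (k : R) (A : 'M[R]_(m, n)) (B : 'M[R]_(p, q)) :
  (k *: A) *t B = k *: (A *t B).
Proof. by apply/matrixP => i j; rewrite !mxE mulrA. Qed.

Lemma tensmxZr m n p q (k : R) (A : 'M[R]_(m, n)) (B : 'M[R]_(p, q)) :
  A *t (k *: B) = k *: (A *t B).
Proof. by apply/matrixP => i j; rewrite !mxE mulrCA. Qed.

Lemma tens1mx1 m n : (1%:M : 'M[R]_m) *t (1%:M : 'M[R]_n) = 1%:M.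
Proof.
apply/matrixP => i j.
case: (mxtens_indexP i) => i1 i2; case: (mxtens_indexP j) => j1 j2.
rewrite tensmxE !mxE (inj_eq (can_inj (@mxtens_indexK m n))) xpair_eqE.
by case: (i1 == j1); case: (i2 == j2); rewrite /= ?mulr1 ?mulr0 ?mul0r.
Qed.

Lemma tensmxA m n p q r s (A : 'M[R]_(m, n)) (B : 'M[R]_(p, q)) (C : 'M[R]_(r, s))
    (e1 : (m * p * r = m * (p * r))%N) (e2 : (n * q * s = n * (q * s))%N) :
  castmx (e1, e2) ((A *t B) *t C) = A *t (B *t C).
Proof.
apply/matrixP => i j; rewrite castmxE.
case: (mxtens_indexP i) => i1 i23; case: (mxtens_indexP i23) => i2 i3.
case: (mxtens_indexP j) => j1 j23; case: (mxtens_indexP j23) => j2 j3.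
have -> : cast_ord (esym e1) (mxtens_index (i1, mxtens_index (i2, i3)))
    = mxtens_index (mxtens_index (i1, i2), i3).
  by apply: val_inj => /=; rewrite mulnDl -mulnA addnA.
have -> : cast_ord (esym e2) (mxtens_index (j1, mxtens_index (j2, j3)))
    = mxtens_index (mxtens_index (j1, j2), j3).
  by apply: val_inj => /=; rewrite mulnDl -mulnA addnA.
by rewrite !tensmxE mulrA.
Qed.

Lemma castmx_mulmx n n' (e : n = n') (A B : 'M[R]_n) :
  castmx (e, e) (A *m B) = castmx (e, e) A *m castmx (e, e) B.
Proof. by case: n' / e. Qed.

Lemma castmx1 n n' (e : n = n') : castmx (e, e) (1%:M : 'M[R]_n) = 1%:M.
Proof. by case: n' / e. Qed.

Lemma tens1mx_inj p m n (A B : 'M[R]_(m, n)) :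
  (1%:M : 'M[R]_p.+1) *t A = 1%:M *t B -> A = B.
Proof.
move=> eqAB; apply/matrixP => i j.
have := congr1 (fun M : 'M[R]_(p.+1 * m, p.+1 * n) =>
  M (mxtens_index (ord0, i)) (mxtens_index (ord0, j))) eqAB.
by rewrite /= !tensmxE !mxE /= !mul1r.
Qed.

Lemma tensmx1_inj p m n (A B : 'M[R]_(m, n)) :
  A *t (1%:M : 'M[R]_p.+1) = B *t 1%:M -> A = B.
Proof.
move=> eqAB; apply/matrixP => i j.
have := congr1 (fun M : 'M[R]_(m * p.+1, n * p.+1) =>
  M (mxtens_index (i, ord0)) (mxtens_index (j, ord0))) eqAB.
by rewrite /= !tensmxE !mxE /= !mulr1.
Qed.

Lemma tens1mx_sqr1 p n (A : 'M[R]_n) :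
  ((1%:M : 'M[R]_p.+1) *t A) *m (1%:M *t A) = 1%:M -> A *m A = 1%:M.
Proof. by rewrite tensmx_mul mulmx1 -[X in _ = X]tens1mx1 => /tens1mx_inj. Qed.

End KroneckerProduct.

Section NumDomainMatrices.
Variable R : numDomainType.

Lemma mx_eqNr_eq0 m n (A : 'M[R]_(m, n)) : - A = A -> A = 0.
Proof.
move/matrixP=> eqNA; apply/matrixP => i j.
by have := eqNA i j; rewrite !mxE => /eqP; rewrite eqNr => /eqP.
Qed.

Lemma tens_traceless_eq_tens1 m (A : 'M[R]_2) (W T : 'M[R]_m) :
  A 1 1 = - A 0 0 -> A *t W = 1%:M *t T -> T = 0.
Proof.
move=> A11 eqAT; apply: mx_eqNr_eq0; apply/matrixP => i j.
have entry a := congr1 (fun M : 'M[R]_(2 * m) =>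
  M (mxtens_index (a, i)) (mxtens_index (a, j))) eqAT.
move: (entry 0) (entry 1); rewrite /= !tensmxE !mxE /= !mul1r A11 mulNr => T00 T11.
by rewrite -{1}T00.
Qed.

End NumDomainMatrices.

Section UnitMatrices.
Variable R : comUnitRingType.

Lemma unitmx_neq0 n (A : 'M[R]_n) : (0 < n)%N -> A \in unitmx -> A != 0.
Proof. by case: n A => // n A _; apply: contraTneq => ->; rewrite unitmxE det0 unitr0. Qed.

Lemma conj_sqr1 n (C A B : 'M[R]_n) :
  C \in unitmx -> C *m A = B *m C -> A *m A = 1%:M -> B *m B = 1%:M.
Proof.
move=> unitC eqCAB AA.
have -> : B = C *m A *m invmx C by rewrite eqCAB mulmxK.
by rewrite -!mulmxA mulKmx // (mulmxA A) AA mul1mx mulmxV.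
Qed.

End UnitMatrices.

(** * Symbolic conjugation of Pauli pairs *)

(** A pair [(b, p) : bool * pauli] stands for (-1)^b p, a triple
    [(s, a, b) : bool * pauli * pauli] for (-1)^s a ⊗ b. *)

Definition has_x (p : pauli) : bool := if p is (PX | PXZ) then true else false.
Definition has_z (p : pauli) : bool := if p is (PZ | PXZ) then true else false.

Definition pauli_of (x z : bool) : pauli :=
  match x, z with
  | false, false => PI | true, false => PX | false, true => PZ | true, true => PXZ
  end.

Definition H_conj (p : pauli) : bool * pauli :=
  match p with
  | PI => (false, PI) | PX => (false, PZ) | PZ => (false, PX) | PXZ => (true, PXZ)
  end.

Definition CZ_conj (a b : pauli) : bool * pauli * pauli :=
  (has_x a && has_x b, pauli_of (has_x a) (has_z a (+) has_x b),
   pauli_of (has_x b) (has_x a (+) has_z b)).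

Inductive gate2 := GH1 | GH2 | GCZ.

Definition gate2_conj (g : gate2) (x : bool * pauli * pauli) : bool * pauli * pauli :=
  let: (s, a, b) := x in
  match g with
  | GH1 => (s (+) (H_conj a).1, (H_conj a).2, b)
  | GH2 => (s (+) (H_conj b).1, a, (H_conj b).2)
  | GCZ => (s (+) (CZ_conj a b).1.1, (CZ_conj a b).1.2, (CZ_conj a b).2)
  end.

Definition word_conj (w : seq gate2) (x : bool * pauli * pauli) : bool * pauli * pauli :=
  foldl (fun y g => gate2_conj g y) x w.

Definition D_word (d : Dsym) : seq gate2 :=
  match d with
  | D1 => [:: GCZ; GH1; GH2; GCZ; GH1; GH2; GCZ; GH2]
  | D2 => [:: GH1; GCZ; GH1; GH2; GCZ; GH2]
  | D3 => [:: GH1; GH2; GCZ; GH1; GH2; GCZ; GH2]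
  | D4 => [:: GH1; GCZ; GH1; GH2; GCZ; GH2; GCZ]
  end.

Definition D_choice (b : pauli) : Dsym :=
  match b with PI => D1 | PX => D2 | PZ => D3 | PXZ => D4 end.

Lemma D_choice_clears s a b : has_x a ->
  (word_conj (D_word (D_choice b)) (s, a, b)).1.2 = PI /\
  has_x (word_conj (D_word (D_choice b)) (s, a, b)).2.
Proof. by case: s; case: a; case: b. Qed.

Lemma D_choice_unique s a b d : has_x a ->
  (word_conj (D_word d) (s, a, b)).1.2 = PI -> d = D_choice b.
Proof. by case: s; case: a; case: b; case: d. Qed.

Definition D_image d s (f : nat -> pauli) : bool * pauli * pauli :=
  word_conj (D_word d) (s, f 0%N, f 1%N).

Definition D_tail d s (f : nat -> pauli) : nat -> pauli :=
  fun i => if i is j.+1 then f j.+2 else (D_image d s f).2.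

Ltac mx2_entrywise := let i := fresh "i" in let j := fresh "j" in
  apply/matrixP => i j; do 3 (rewrite ?mxE ?big_ord_recr ?big_ord0 /=);
  case: i => [[|[|//]] ?]; case: j => [[|[|//]] ?]; rewrite /= ?mxE /= ?expr0 ?expr1.

Ltac mx4_entrywise := let i := fresh "i" in let j := fresh "j" in
  apply/matrixP => i j; do 3 (rewrite ?mxE ?big_ord_recr ?big_ord0 /=);
  case: i => [[|[|[|[|//]]]] ?]; case: j => [[|[|[|[|//]]]] ?];
  rewrite /= ?mxE /= ?expr0 ?expr1.

Section QubitCircuits.
Variable R : realType.
Local Notation pm := (pauli_mx R).

Definition spauli_mx (sp : bool * pauli) : 'M[R]_2 := (-1) ^+ sp.1 *: pm sp.2.

Definition spair_mx (x : bool * pauli * pauli) : 'M[R]_(2 * 2) := spauli_mx x.1 *t pm x.2.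

Lemma Hm_sqr : Hm R *m Hm R = 1%:M.
Proof.
have hh : (Num.sqrt (2 : R))^-1 * (Num.sqrt 2)^-1 = 2^-1.
  by rewrite -invfM -expr2 sqr_sqrtr // ler0n.
mx2_entrywise; set h := (Num.sqrt 2)^-1 in hh *; nra.
Qed.

Lemma Zm_sqr : Zm R *m Zm R = 1%:M.
Proof. by mx2_entrywise; ring. Qed.

Lemma CZm_sqr : CZm R *m CZm R = 1%:M.
Proof. by mx4_entrywise; ring. Qed.

Lemma pauli_mx_traceless p : p <> PI -> pm p 1 1 = - pm p 0 0.
Proof. by case: p => // _; do 3 (rewrite ?mxE ?big_ord_recr ?big_ord0 /=); ring. Qed.

Lemma pauli_mx_sqr_has_x p : has_x p -> pm p *m pm p = 1%:M -> p = PX.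
Proof.
case: p => // _ /matrixP /(_ 0 0).
do 3 (rewrite ?mxE ?big_ord_recr ?big_ord0 /=); move=> entry00; exfalso; lra.
Qed.

Lemma pauli_mx_commute_Z p : ~~ has_x p -> pm p *m Zm R = Zm R *m pm p.
Proof. by case: p => // _; mx2_entrywise; ring. Qed.

Lemma Hm_conj p : Hm R *m pm p = spauli_mx (H_conj p) *m Hm R.
Proof. by case: p; mx2_entrywise; ring. Qed.

Lemma CZm_conj a b : CZm R *m (pm a *t pm b) = spair_mx (CZ_conj a b) *m CZm R.
Proof. by case: a; case: b; mx4_entrywise; ring. Qed.

Definition gate2_mx (g : gate2) : 'M[R]_(2 * 2) :=
  match g with
  | GH1 => Hm R *t (1%:M : 'M_2)
  | GH2 => (1%:M : 'M_2) *t Hm R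
  | GCZ => CZm R
  end.

Lemma gate2_mx_sqr g : gate2_mx g *m gate2_mx g = 1%:M.
Proof. by case: g; rewrite /= ?CZm_sqr // tensmx_mul Hm_sqr mulmx1 tens1mx1. Qed.

Lemma gate2_mx_conj g x :
  gate2_mx g *m spair_mx x = spair_mx (gate2_conj g x) *m gate2_mx g.
Proof.
case: x => [[s a] b]; case: g; rewrite /spair_mx /spauli_mx /=.
- rewrite !tensmx_mul mul1mx mulmx1 -scalemxAr Hm_conj -scalemxAl scalerA.
  by rewrite -signr_addb scalemxAl.
- rewrite !tensmx_mul mul1mx mulmx1 Hm_conj -scalemxAl !tensmxZr !tensmxZl scalerA.
  by rewrite signr_addb mulrC.
- rewrite !tensmxZl -scalemxAr CZm_conj /spair_mx /spauli_mx /= !tensmxZl.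
  by rewrite signr_addb -scalerA !scalemxAl.
Qed.

Definition E_mx (e : Esym) : 'M[R]_2 := if e is E2 then Zm R else 1%:M.

Lemma E_mx_sqr e : E_mx e *m E_mx e = 1%:M.
Proof. by case: e; rewrite /= ?Zm_sqr ?mulmx1. Qed.

Lemma E_mx_conj_X e (s : bool) :
  E_mx e *m ((-1) ^+ s *: Xm R) = Xm R *m E_mx e <-> e = (if s then E2 else E1).
Proof.
case: e; case: s; split=> //=; try by move=> _; mx2_entrywise; ring.
all: move=> /matrixP /(_ 0 1); do 3 (rewrite ?mxE ?big_ord_recr ?big_ord0 /=).
all: rewrite ?expr0 ?expr1 => entry01; exfalso; lra.
Qed.

Lemma qdim_gt0 k : (0 < qdim k)%N.
Proof. by rewrite qdimE expn_gt0. Qed.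

Lemma conjb_eq n (C A B : 'M[R]_n) :
  C \in unitmx -> conjb C A = B <-> C *m A = B *m C.
Proof. by move=> unitC; rewrite /conjb; split=> [<- | ->]; rewrite ?mulmxKV ?mulmxK. Qed.

Lemma tensn_ext k (f g : nat -> 'M[R]_2) :
  (forall i, f i = g i) -> tensn k f = tensn k g.
Proof.
by elim: k f g => [|k IHk] f g eq_fg //=; rewrite eq_fg (IHk _ (fun i => g i.+1)).
Qed.

Lemma tensn_mul k (f g : nat -> 'M[R]_2) :
  tensn k f *m tensn k g = tensn k (fun i => f i *m g i).
Proof. by elim: k f g => [|k IHk] f g /=; rewrite ?mulmx1 // tensmx_mul IHk. Qed.

Lemma tensn1 k : tensn k (fun=> 1%:M : 'M[R]_2) = 1%:M.
Proof. by elim: k => //= k ->; rewrite tens1mx1. Qed.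

Lemma tensn_sqr1 k (f : nat -> 'M[R]_2) :
  (forall i, f i *m f i = 1%:M) -> tensn k f *m tensn k f = 1%:M.
Proof. by move=> ff1; rewrite tensn_mul -(tensn1 k); apply: tensn_ext. Qed.

(** [pauli_op R n s P] is [pauli_opf n s (nth PI P)]; indexing by a function
    makes dropping the first qubit a mere shift. *)
Definition pauli_opf k (s : bool) (f : nat -> pauli) : 'M[R]_(qdim k) :=
  (-1) ^+ s *: tensn k (fun i => pm (f i)).

Definition Zfirst k : 'M[R]_(qdim k) :=
  tensn k (fun i => if i == 0%N then Zm R else 1%:M).

Definition Xlast k : 'M[R]_(qdim k) :=
  tensn k (fun i => if i == k.-1 then Xm R else 1%:M).

Lemma pauli_opf_sqr k s f :
  pauli_opf k s f *m pauli_opf k s f = tensn k (fun i => pm (f i) *m pm (f i)).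
Proof.
by rewrite /pauli_opf -scalemxAl -scalemxAr scalerA -signr_addb addbb scale1r tensn_mul.
Qed.

Lemma Xlast_unit k : Xlast k \in unitmx.
Proof.
have /mulmx1_unit[] // : Xlast k *m Xlast k = 1%:M.
by apply: tensn_sqr1 => i; case: ifP => _; rewrite ?mulmx1 //; mx2_entrywise; ring.
Qed.

Lemma has_x_anticommute_Zfirst k s f :
  pauli_opf k.+1 s f *m pauli_opf k.+1 s f = 1%:M ->
  pauli_opf k.+1 s f *m Zfirst k.+1 = - (Zfirst k.+1 *m pauli_opf k.+1 s f) ->
  has_x (f 0%N).
Proof.
set Q := pauli_opf k.+1 s f => QQ anticomm; apply: contraT => no_x.
have comm : Q *m Zfirst k.+1 = Zfirst k.+1 *m Q.
  rewrite /Q /pauli_opf -scalemxAl -scalemxAr !tensn_mul; congr (_ *: _).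
  apply: tensn_ext => -[|i] /=; first exact: pauli_mx_commute_Z.
  by rewrite mulmx1 mul1mx.
have QZ0 : Q *m Zfirst k.+1 = 0 by apply: mx_eqNr_eq0; rewrite {2}anticomm comm.
have ZZ : Zfirst k.+1 *m Zfirst k.+1 = 1%:M.
  by apply: tensn_sqr1 => -[|i] /=; rewrite ?Zm_sqr ?mulmx1.
have unit_QZ : Q *m Zfirst k.+1 \in unitmx.
  by rewrite unitmx_mul; case: (mulmx1_unit QQ) => -> _; case: (mulmx1_unit ZZ).
by have := unitmx_neq0 (qdim_gt0 _) unit_QZ; rewrite QZ0 eqxx.
Qed.

Lemma circuit_op_foldl n (c : seq (gate R)) (A : 'M[R]_(qdim n)) :
  foldl (fun acc g => gate_op n g *m acc) A c = circuit_op n c *m A.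
Proof.
rewrite /circuit_op; elim: c A => [|g c IHc] A /=; first by rewrite mul1mx.
by rewrite IHc [in RHS]IHc mulmx1 mulmxA.
Qed.

Lemma circuit_op_cons n g (c : seq (gate R)) :
  circuit_op n (g :: c) = circuit_op n c *m gate_op n g.
Proof. by rewrite {1}/circuit_op /= circuit_op_foldl mulmx1. Qed.

Lemma circuit_op_cat n (c1 c2 : seq (gate R)) :
  circuit_op n (c1 ++ c2) = circuit_op n c2 *m circuit_op n c1.
Proof. by rewrite {1}/circuit_op foldl_cat circuit_op_foldl. Qed.

Lemma circuit_op_unit n (c : seq (gate R)) :
  all (fun g => gate_op n g \in unitmx) c -> circuit_op n c \in unitmx.
Proof.
elim: c => [|g c IHc] /=; first by rewrite unitmx1.
by case/andP=> unit_g unit_c; rewrite circuit_op_cons unitmx_mul IHc.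
Qed.

Definition gate_pos (g : gate R) : nat := match g with Gate1 _ i | Gate2 _ i => i end.

Definition shift_gate (g : gate R) : gate R :=
  match g with Gate1 G i => Gate1 G i.+1 | Gate2 G i => Gate2 G i.+1 end.

Lemma gate_op_shift n g :
  (0 < gate_pos g)%N -> gate_op n.+1 (shift_gate g) = 1%:M *t gate_op n g.
Proof. by case: g => G [|i]. Qed.

Lemma circuit_op_shift n (c : seq (gate R)) : all (fun g => 0 < gate_pos g)%N c ->
  circuit_op n.+1 (map shift_gate c) = 1%:M *t circuit_op n c.
Proof.
elim: c => [|g c IHc] /=; first by rewrite tens1mx1.
case/andP=> pos_g pos_c.
by rewrite !circuit_op_cons IHc // gate_op_shift // tensmx_mul mulmx1.
Qed.

Local Notation D_layer ds i m :=
  (flatten [seq D_gates R p.1 p.2 | p <- zip ds (iota i m)]).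

Lemma D_layer_shift (ds : seq Dsym) i m :
  D_layer ds i.+1 m = map shift_gate (D_layer ds i m).
Proof. by elim: ds i m => [|d ds IHds] i [|m] //=; rewrite map_cat IHds; case: d. Qed.

Lemma D_layer_pos (ds : seq Dsym) i m :
  all (fun g => 0 < gate_pos g)%N (D_layer ds i.+1 m).
Proof. by elim: ds i m => [|d ds IHds] i [|m] //=; rewrite all_cat IHds andbT; case: d. Qed.

Lemma xcircuit_op_cons k d (t : k.-tuple Dsym) e :
  xcircuit_op R ((cons_tuple d t, e) : xcircuit k.+2) =
  (1%:M *t xcircuit_op R ((t, e) : xcircuit k.+1)) *m circuit_op k.+2 (D_gates R d 1).
Proof.
rewrite /xcircuit_op /xcircuit_gates /= -catA circuit_op_cat; congr (_ *m _).
have -> : E_gates R e k.+2 = map shift_gate (E_gates R e k.+1) by case: e.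
rewrite (D_layer_shift t 1 k) -map_cat circuit_op_shift //.
by rewrite all_cat D_layer_pos; case: e.
Qed.

Lemma xcircuit1_op (t : 0.-tuple Dsym) e :
  xcircuit_op R ((t, e) : xcircuit 1) = E_mx e *t (1%:M : 'M[R]_1).
Proof.
by rewrite (tuple0 t); case: e; rewrite /xcircuit_op /circuit_op /= ?mulmx1 ?tens1mx1.
Qed.

Definition gate2_gate (g : gate2) : gate R :=
  match g with GH1 => Gate1 (Hm R) 1 | GH2 => Gate1 (Hm R) 2 | GCZ => Gate2 (CZm R) 1 end.

Lemma D_gatesE d : D_gates R d 1 = map gate2_gate (D_word d).
Proof. by case: d. Qed.

Lemma tensmxA_dim4 k (A B : 'M[R]_2) (T : 'M[R]_(qdim k)) :
  castmx (dim4 k, dim4 k) ((A *t B) *t T) = A *t (B *t T).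
Proof. exact: tensmxA. Qed.

Lemma gate2_gate_op k g :
  gate_op k.+2 (gate2_gate g) = castmx (dim4 k, dim4 k) (gate2_mx g *t 1%:M).
Proof. by case: g; rewrite //= tensmxA_dim4 ?tens1mx1. Qed.

Lemma D_op_unit k d : circuit_op k.+2 (D_gates R d 1) \in unitmx.
Proof.
have unit_g g : gate_op k.+2 (gate2_gate g) \in unitmx.
  have /mulmx1_unit[] // : gate_op k.+2 (gate2_gate g) *m gate_op k.+2 (gate2_gate g) = 1%:M.
  by rewrite gate2_gate_op -castmx_mulmx tensmx_mul gate2_mx_sqr mulmx1 tens1mx1 castmx1.
rewrite D_gatesE; apply: circuit_op_unit.
by elim: (D_word d) => //= g w ->; rewrite unit_g.
Qed.

Lemma xcircuit_op_unit k (M : xcircuit k.+1) : xcircuit_op R M \in unitmx.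
Proof.
elim: k M => [|k IHk] [t e].
  have /mulmx1_unit[] // : xcircuit_op R ((t, e) : xcircuit 1) *m xcircuit_op R (t, e) = 1%:M.
  by rewrite xcircuit1_op tensmx_mul E_mx_sqr mulmx1 tens1mx1.
case/tupleP: t => d t; rewrite xcircuit_op_cons unitmx_mul D_op_unit andbT.
have := qdim_gt0 k.+1; rewrite lt0n => qdim_neq0.
by apply: tensmx_unit; rewrite ?unitmx1 ?IHk.
Qed.

Lemma circuit_op_word_conj k w x (T : 'M[R]_(qdim k)) :
  circuit_op k.+2 (map gate2_gate w) *m castmx (dim4 k, dim4 k) (spair_mx x *t T) =
  castmx (dim4 k, dim4 k) (spair_mx (word_conj w x) *t T) *m
    circuit_op k.+2 (map gate2_gate w).
Proof.
elim: w x => [|g w IHw] x /=; first by rewrite mul1mx mulmx1.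
have gate_conj y :
    gate_op k.+2 (gate2_gate g) *m castmx (dim4 k, dim4 k) (spair_mx y *t T) =
    castmx (dim4 k, dim4 k) (spair_mx (gate2_conj g y) *t T) *m gate_op k.+2 (gate2_gate g).
  by rewrite gate2_gate_op -!castmx_mulmx !tensmx_mul gate2_mx_conj mul1mx mulmx1.
by rewrite circuit_op_cons -mulmxA gate_conj mulmxA IHw mulmxA.
Qed.

Lemma D_op_conj k d s f :
  circuit_op k.+2 (D_gates R d 1) *m pauli_opf k.+2 s f =
  (pm (D_image d s f).1.2 *t pauli_opf k.+1 (D_image d s f).1.1 (D_tail d s f)) *m
    circuit_op k.+2 (D_gates R d 1).
Proof.
have split2 : pauli_opf k.+2 s f = castmx (dim4 k, dim4 k)
    (spair_mx (s, f 0%N, f 1%N) *t tensn k (fun i => pm (f i.+2))).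
  by rewrite tensmxA_dim4 /pauli_opf /= tensmxZl.
rewrite split2 D_gatesE circuit_op_word_conj; congr (_ *m _).
by rewrite tensmxA_dim4 /pauli_opf /= tensmxZl tensmxZr.
Qed.

Lemma xcircuit_cons_conj k d (t : k.-tuple Dsym) e s f :
  let M := (cons_tuple d t, e) : xcircuit k.+2 in
  let M' := (t, e) : xcircuit k.+1 in
  xcircuit_op R M *m pauli_opf k.+2 s f = Xlast k.+2 *m xcircuit_op R M <->
  (D_image d s f).1.2 = PI /\
  xcircuit_op R M' *m pauli_opf k.+1 (D_image d s f).1.1 (D_tail d s f) =
    Xlast k.+1 *m xcircuit_op R M'.
Proof.
move=> M M'; set C := xcircuit_op R M'; set Q' := pauli_opf k.+1 _ _.
have XlastS : Xlast k.+2 = 1%:M *t Xlast k.+1 by [].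
rewrite xcircuit_op_cons XlastS -mulmxA D_op_conj !mulmxA !tensmx_mul !mul1mx.
split=> [/(can_inj (mulmxK (D_op_unit k d))) | [-> ->]] //.
have XC_neq0 : Xlast k.+1 *m C != 0.
  by rewrite unitmx_neq0 ?qdim_gt0 // unitmx_mul Xlast_unit xcircuit_op_unit.
case: (D_image d s f).1.2 => eqC; first by split=> //; apply: (tens1mx_inj (p := 1)) eqC.
all: by case/eqP: XC_neq0; apply: tens_traceless_eq_tens1 eqC; apply: pauli_mx_traceless.
Qed.

Lemma xcircuit1_exists_unique s f :
  has_x (f 0%N) -> pauli_opf 1 s f *m pauli_opf 1 s f = 1%:M ->
  exists! M : xcircuit 1, xcircuit_op R M *m pauli_opf 1 s f = Xlast 1 *m xcircuit_op R M.
Proof.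
move=> f0_x; rewrite pauli_opf_sqr -(tensn1 1).
move=> /tensmx1_inj /(pauli_mx_sqr_has_x f0_x) f0X.
have Q1 : pauli_opf 1 s f = ((-1) ^+ s *: Xm R) *t 1%:M.
  by rewrite /pauli_opf /= f0X tensmxZl.
have solves (M : xcircuit 1) :
    xcircuit_op R M *m pauli_opf 1 s f = Xlast 1 *m xcircuit_op R M <->
    M.2 = (if s then E2 else E1).
  case: M => t e; rewrite xcircuit1_op Q1 /= !tensmx_mul mulmx1 -E_mx_conj_X.
  by split=> [/tensmx1_inj | ->].
exists ([tuple], if s then E2 else E1); split; first exact/solves.
by case=> t e /solves /= ->; rewrite (tuple0 t).
Qed.

Lemma xcircuit_exists_unique k s f :
  has_x (f 0%N) -> pauli_opf k.+1 s f *m pauli_opf k.+1 s f = 1%:M ->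
  exists! M : xcircuit k.+1,
    xcircuit_op R M *m pauli_opf k.+1 s f = Xlast k.+1 *m xcircuit_op R M.
Proof.
elim: k s f => [|k IHk] s f f0_x QQ; first exact: xcircuit1_exists_unique.
set d := D_choice (f 1%N).
have [cleared tail_x] := D_choice_clears s (f 1%N) f0_x.
have QQ' : pauli_opf k.+1 (D_image d s f).1.1 (D_tail d s f) *m
           pauli_opf k.+1 (D_image d s f).1.1 (D_tail d s f) = 1%:M.
  have := D_op_conj k d s f; rewrite [(D_image d s f).1.2]cleared => conjD.
  exact/(tens1mx_sqr1 (p := 1))/(conj_sqr1 (D_op_unit k d) conjD).
have [[t e] [solves unique_sol]] := IHk _ _ tail_x QQ'.
exists (cons_tuple d t, e); split; first exact/xcircuit_cons_conj.
case=> t' e'; case/tupleP: t' => d' t' /xcircuit_cons_conj [residue_I solves'].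
rewrite (D_choice_unique f0_x residue_I) -/d in solves' *.
by case: (unique_sol (t', e') solves') => -> ->.
Qed.

End QubitCircuits.

(** The hypotheses [Q <> 1%:M] and [Q <> - 1%:M] already follow from the
    anticommutation with Z on qubit 1. *)
Theorem proposition4p12 (R : realType) (n : nat) (s : bool)
    (P : n.-tuple pauli) :
  (1 <= n)%N ->
  let Q := pauli_op R s P in
  Q *m Q = 1%:M ->
  Q <> 1%:M -> Q <> - 1%:M ->
  Q *m tensn n (fun i => if i == 0%N then Zm R else 1%:M)
    = - (tensn n (fun i => if i == 0%N then Zm R else 1%:M) *m Q) ->
  exists! M : xcircuit n,
    conjb (xcircuit_op R M) Q
      = tensn n (fun i => if i == n.-1 then Xm R else 1%:M).
Proof.
case: n P => [//|k] P _ Q QQ _ _ anticomm.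
have f0_x := has_x_anticommute_Zfirst QQ anticomm.
have [M [solves unique_sol]] := xcircuit_exists_unique f0_x QQ.
exists M; split=> [|M']; rewrite conjb_eq ?xcircuit_op_unit //; exact: unique_sol.
Qed.
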